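(* Let $(G^{(m)})_{m\ge1}$ be a sequence of finite simple graphs, and for each $m$ let $C_m\subseteq V(G^{(m)})$ be a clique (a set of pairwise adjacent vertices) in $G^{(m)}$. Let $S_m\subseteq C_m$ be the set of non-gateway vertices of $C_m$, and suppose $|S_m|\to\infty$ as $m\to\infty$. Let $x_m\in S_m$. Then for every fixed $t\ge0$, $$\lim_{m\to\infty}P^{x_m}_{G^{(m)},t}(x_m)=1.$$
   Context: For a finite simple graph $G$, $L_G=D_G-A_G$ is its Laplacian ($A_G$ adjacency matrix, $D_G$ diagonal degree matrix). The continuous-time quantum walk (CTQW) on $G$ has evolution operator $U_{G,t}=e^{\sqrt{-1}\,tL_G}$ ($t\ge0$), and the transition probability is $P^x_{G,t}(y)=|(U_{G,t})_{x,y}|^2$ for $x,y\in V(G)$. If $C$ is a clique in $G$, a vertex $v\in C$ is a gateway vertex of $C$ if there is an edge $(v,w)$ of $G$ with $w\in V(G)\setminus C$; the number of gateway vertices is $n_g$ and $|C|=n_c$, so $|S|=n_c-n_g$ for the set $S$ of non-gateway vertices. *)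

From Stdlib Require Import Reals List Bool Arith ClassicalEpsilon.
Open Scope R_scope.

Definition simple_graph (n : nat) (adj : nat -> nat -> bool) : Prop :=
  (forall u v, (u < n)%nat -> (v < n)%nat -> adj u v = adj v u) /\
  (forall u, (u < n)%nat -> adj u u = false).

Definition sumR (n : nat) (f : nat -> R) : R :=
  fold_right Rplus 0 (map f (seq 0 n)).

Definition degree (n : nat) (adj : nat -> nat -> bool) (u : nat) : R :=
  sumR n (fun w => if adj u w then 1 else 0).

Definition laplacian (n : nat) (adj : nat -> nat -> bool) (u v : nat) : R :=
  (if Nat.eqb u v then degree n adj u else 0) - (if adj u v then 1 else 0).

Fixpoint lap_pow (n : nat) (adj : nat -> nat -> bool) (k : nat) (u v : nat) : R :=
  match k with
  | O => if Nat.eqb u v then 1 else 0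
  | S k' => sumR n (fun w => laplacian n adj u w * lap_pow n adj k' w v)
  end.

(* real and imaginary parts of i^k *)
Definition re_ipow (k : nat) : R :=
  if Nat.even k then (-1) ^ (Nat.div2 k) else 0.
Definition im_ipow (k : nat) : R :=
  if Nat.even k then 0 else (-1) ^ (Nat.div2 k).

Definition series_value (f : nat -> R) : R :=
  epsilon (inhabits 0) (fun l => infinite_sum f l).

(* Since L is real, e^{i t L} = sum_k (i t L)^k / k! has
   real part sum_k Re(i^k) t^k L^k / k! and imaginary part sum_k Im(i^k) t^k L^k / k!. *)
Definition U_re (n : nat) (adj : nat -> nat -> bool) (t : R) (x y : nat) : R :=
  series_value (fun k => re_ipow k * t ^ k / INR (fact k) * lap_pow n adj k x y).
Definition U_im (n : nat) (adj : nat -> nat -> bool) (t : R) (x y : nat) : R :=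
  series_value (fun k => im_ipow k * t ^ k / INR (fact k) * lap_pow n adj k x y).

Definition transition_prob (n : nat) (adj : nat -> nat -> bool) (t : R) (x y : nat) : R :=
  (U_re n adj t x y) ^ 2 + (U_im n adj t x y) ^ 2.

Definition is_clique (n : nat) (adj : nat -> nat -> bool) (C : nat -> bool) : Prop :=
  (forall v, C v = true -> (v < n)%nat) /\
  (forall u v, C u = true -> C v = true -> u <> v -> adj u v = true).

Definition gatewayb (n : nat) (adj : nat -> nat -> bool) (C : nat -> bool) (v : nat) : bool :=
  C v && existsb (fun w => negb (C w) && adj v w) (seq 0 n).

Definition in_nongateway (n : nat) (adj : nat -> nat -> bool) (C : nat -> bool) (v : nat) : bool :=
  C v && negb (gatewayb n adj C v).

Definition card_nongateway (n : nat) (adj : nat -> nat -> bool) (C : nat -> bool) : nat :=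
  length (filter (in_nongateway n adj C) (seq 0 n)).

From Stdlib Require Import Reals List Bool Arith Lia Lra Classical ClassicalEpsilon.
From Coquelicot Require Import Coquelicot.
Open Scope R_scope.

(* Let λ = |C|. A non-gateway vertex of C is adjacent to exactly the other vertices of C,
   so for distinct x, y in S the vector e_x - e_y is an eigenvector of L for λ, whence
   U_xx - U_xy = e^{itλ}. The row x of the unitary U has norm 1, so some y in S \ {x} has
   |U_xy|^2 <= 1/(|S| - 1); thus U_xx lies within 1/sqrt(|S| - 1) of the unit circle point
   e^{itλ}, and |U_xx|^2 -> 1. U is handled through its real and imaginary parts cos(tL) and
   sin(tL), as power series in t; unitarity of a row comes from the time derivative of its
   squared norm vanishing, which uses that L is symmetric and commutes with cos(tL), sin(tL). *)

Lemma fold_right_Rplus_init (l : list R) (a : R) :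
  fold_right Rplus a l = fold_right Rplus 0 l + a.
Proof. induction l as [|b l IH]; simpl; [lra | rewrite IH; lra]. Qed.

Lemma sumR_0 f : sumR 0 f = 0.
Proof. reflexivity. Qed.

Lemma sumR_S n f : sumR (S n) f = sumR n f + f n.
Proof.
  unfold sumR. rewrite seq_S, map_app, fold_right_app; simpl.
  rewrite fold_right_Rplus_init. lra.
Qed.

Lemma sumR_ext n f g : (forall w, (w < n)%nat -> f w = g w) -> sumR n f = sumR n g.
Proof.
  induction n as [|n IH]; intros Hfg; [reflexivity|].
  rewrite !sumR_S, IH, Hfg; auto.
Qed.

Lemma sumR_plus n f g : sumR n (fun w => f w + g w) = sumR n f + sumR n g.
Proof. induction n as [|n IH]; [rewrite !sumR_0; ring | rewrite !sumR_S, IH; ring]. Qed.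

Lemma sumR_minus n f g : sumR n (fun w => f w - g w) = sumR n f - sumR n g.
Proof. induction n as [|n IH]; [rewrite !sumR_0; ring | rewrite !sumR_S, IH; ring]. Qed.

Lemma sumR_scal n c f : sumR n (fun w => c * f w) = c * sumR n f.
Proof. induction n as [|n IH]; [rewrite !sumR_0; ring | rewrite !sumR_S, IH; ring]. Qed.

Lemma sumR_const n c : sumR n (fun _ => c) = INR n * c.
Proof.
  induction n as [|n IH]; [rewrite sumR_0; simpl; ring | rewrite sumR_S, IH, S_INR; ring].
Qed.

Lemma sumR_swap n m f :
  sumR n (fun a => sumR m (fun b => f a b)) = sumR m (fun b => sumR n (fun a => f a b)).
Proof.
  induction n as [|n IH].
  - rewrite sumR_0, (sumR_ext m _ (fun _ => 0)) by reflexivity.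
    rewrite sumR_const; ring.
  - rewrite sumR_S, IH, <- sumR_plus. apply sumR_ext; intros. now rewrite sumR_S.
Qed.

Lemma sumR_le n f g : (forall w, (w < n)%nat -> f w <= g w) -> sumR n f <= sumR n g.
Proof.
  induction n as [|n IH]; intros Hfg; [rewrite !sumR_0; lra|].
  rewrite !sumR_S. specialize (Hfg n (Nat.lt_succ_diag_r n)) as Hn.
  enough (sumR n f <= sumR n g) by lra. apply IH; auto.
Qed.

Lemma sumR_lt n f g : (forall w, (w < n)%nat -> f w <= g w) ->
  (exists w, (w < n)%nat /\ f w < g w) -> sumR n f < sumR n g.
Proof.
  induction n as [|n IH]; intros Hfg [w [Hw Hlt]]; [lia|].
  rewrite !sumR_S. assert (Hn : f n <= g n) by auto.
  destruct (Nat.eq_dec w n) as [->|Hwn].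
  - enough (sumR n f <= sumR n g) by lra. apply sumR_le; auto.
  - enough (sumR n f < sumR n g) by lra.
    apply IH; [auto | exists w; split; [lia | exact Hlt]].
Qed.

Lemma Rabs_sumR_le n f : Rabs (sumR n f) <= sumR n (fun w => Rabs (f w)).
Proof.
  induction n as [|n IH]; [rewrite !sumR_0, Rabs_R0; lra|].
  rewrite !sumR_S. eapply Rle_trans; [apply Rabs_triang | lra].
Qed.

Lemma sumR_kronecker n a f : (a < n)%nat ->
  sumR n (fun w => if Nat.eqb w a then f w else 0) = f a.
Proof.
  induction n as [|n IH]; intros Ha; [lia|]. rewrite sumR_S.
  destruct (Nat.eq_dec a n) as [->|Han].
  - rewrite Nat.eqb_refl, (sumR_ext n _ (fun _ => 0)), sumR_const; [ring|].
    intros w Hw. destruct (Nat.eqb_spec w n); [lia | reflexivity].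
  - rewrite IH by lia. destruct (Nat.eqb_spec n a); [lia | ring].
Qed.

Lemma sumR_indicator n (p : nat -> bool) :
  sumR n (fun y => if p y then 1 else 0) = INR (length (filter p (seq 0 n))).
Proof.
  unfold sumR. induction (seq 0 n) as [|a l IH]; [reflexivity|].
  cbn [map fold_right filter]. rewrite IH.
  destruct (p a); cbn [length]; [rewrite S_INR|]; lra.
Qed.

Lemma sumR_pigeonhole n (T : nat -> bool) f :
  (forall y, (y < n)%nat -> 0 <= f y) -> sumR n f <= 1 ->
  (1 <= length (filter T (seq 0 n)))%nat ->
  exists y, (y < n)%nat /\ T y = true /\ INR (length (filter T (seq 0 n))) * f y <= 1.
Proof.
  intros Hf Hsum HT. set (k := INR (length (filter T (seq 0 n)))).
  apply NNPP; intros Hnone.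
  assert (Hbig : forall y, (y < n)%nat -> T y = true -> 1 < k * f y).
  { intros y Hy HTy. apply Rnot_le_lt. intros Hle. apply Hnone. now exists y. }
  assert (Hne : exists y, (y < n)%nat /\ T y = true).
  { destruct (filter T (seq 0 n)) as [|y l] eqn:E; [simpl in HT; lia|].
    assert (Hy : In y (filter T (seq 0 n))) by (rewrite E; left; reflexivity).
    apply filter_In in Hy as [Hy HTy]. apply in_seq in Hy. exists y; split; [lia | exact HTy]. }
  assert (Hlt : sumR n (fun y => if T y then 1 else 0)
              < sumR n (fun y => if T y then k * f y else 0)).
  { apply sumR_lt.
    - intros y Hy. destruct (T y) eqn:E; [left; apply Hbig | right]; auto.
    - destruct Hne as [y [Hy HTy]]. exists y. rewrite HTy. auto. }
  assert (Hle : sumR n (fun y => if T y then k * f y else 0) <= sumR n (fun y => k * f y)).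
  { apply sumR_le. intros y Hy. assert (0 <= k) by apply pos_INR.
    specialize (Hf y Hy). destruct (T y); nra. }
  rewrite sumR_indicator, sumR_scal in *. fold k in Hlt.
  assert (0 <= k) by apply pos_INR. nra.
Qed.

Fixpoint mx_pow (n : nat) (M : nat -> nat -> R) (k : nat) (u v : nat) : R :=
  match k with
  | O => if Nat.eqb u v then 1 else 0
  | S k' => sumR n (fun w => M u w * mx_pow n M k' w v)
  end.

Lemma lap_pow_mx_pow n adj k u v : lap_pow n adj k u v = mx_pow n (laplacian n adj) k u v.
Proof.
  revert u v. induction k as [|k IH]; intros u v; simpl; [reflexivity|].
  apply sumR_ext; intros. now rewrite IH.
Qed.

Lemma mx_pow_Sr n M k u v : (u < n)%nat -> (v < n)%nat ->
  mx_pow n M (S k) u v = sumR n (fun w => mx_pow n M k u w * M w v).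
Proof.
  revert u v. induction k as [|k IH]; intros u v Hu Hv.
  - simpl. rewrite (sumR_ext n _ (fun w => if Nat.eqb w v then M u w else 0)),
           (sumR_ext n (fun w => _ * M w v) (fun w => if Nat.eqb w u then M w v else 0)).
    + now rewrite !sumR_kronecker.
    + intros w _. rewrite Nat.eqb_sym. destruct (Nat.eqb w u); ring.
    + intros w _. destruct (Nat.eqb w v); ring.
  - change (mx_pow n M (S (S k)) u v) with (sumR n (fun w => M u w * mx_pow n M (S k) w v)).
    rewrite (sumR_ext n _ (fun w => sumR n (fun z => M u w * mx_pow n M k w z * M z v))).
    + rewrite sumR_swap. apply sumR_ext. intros z Hz. simpl.
      rewrite Rmult_comm, <- sumR_scal. apply sumR_ext; intros; ring.
    + intros w Hw. rewrite IH, <- sumR_scal by auto. apply sumR_ext; intros; ring.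
Qed.

Lemma mx_pow_bound n M K : (forall u w, Rabs (M u w) <= K) ->
  forall k u v, Rabs (mx_pow n M k u v) <= (INR n * K) ^ k.
Proof.
  intros HM k. induction k as [|k IH]; intros u v; simpl.
  - destruct (Nat.eqb u v); rewrite ?Rabs_R1, ?Rabs_R0; lra.
  - eapply Rle_trans; [apply Rabs_sumR_le|].
    eapply Rle_trans.
    + apply (sumR_le _ _ (fun _ => K * (INR n * K) ^ k)). intros w _.
      rewrite Rabs_mult. apply Rmult_le_compat; auto using Rabs_pos.
    + rewrite sumR_const. lra.
Qed.

Lemma mx_pow_scalar lam k : mx_pow 1 (fun _ _ => lam) k 0 0 = lam ^ k.
Proof.
  induction k as [|k IH]; [reflexivity|].
  simpl mx_pow. rewrite sumR_S, sumR_0, IH. simpl; ring.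
Qed.

Lemma re_ipow_bound k : Rabs (re_ipow k) <= 1.
Proof. unfold re_ipow. destruct (Nat.even k); [rewrite pow_1_abs | rewrite Rabs_R0]; lra. Qed.

Lemma im_ipow_bound k : Rabs (im_ipow k) <= 1.
Proof. unfold im_ipow. destruct (Nat.even k); [rewrite Rabs_R0 | rewrite pow_1_abs]; lra. Qed.

Lemma ipow_succ k : re_ipow (S k) = - im_ipow k /\ im_ipow (S k) = re_ipow k.
Proof.
  induction k as [|k [IHre IHim]]; [unfold re_ipow, im_ipow; simpl; split; lra|].
  assert (Hre : re_ipow (S (S k)) = - re_ipow k /\ im_ipow (S (S k)) = - im_ipow k).
  { unfold re_ipow, im_ipow.
    change (Nat.even (S (S k))) with (Nat.even k).
    change (Nat.div2 (S (S k))) with (S (Nat.div2 k)).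
    destruct (Nat.even k); simpl; split; lra. }
  lra.
Qed.

Lemma pow_div_fact_le_exp x k : 0 <= x -> x ^ k / INR (fact k) <= exp x.
Proof.
  intros Hx. eapply Rle_trans; [|apply (exp_ge_taylor x k Hx)].
  destruct k as [|k]; cbn [sum_f_R0]; [apply Rle_refl|].
  enough (0 <= sum_f_R0 (fun j => x ^ j / INR (fact j)) k) by lra.
  apply cond_pos_sum. intros j.
  apply Rdiv_le_0_compat; [apply pow_le; auto | apply INR_fact_lt_0].
Qed.

Lemma CV_radius_exp_dominated (a : nat -> R) B : 0 <= B ->
  (forall k, Rabs (a k) <= B ^ k / INR (fact k)) -> forall t, Rbar_lt (Rabs t) (CV_radius a).
Proof.
  intros HB Ha t. set (r := Rabs t + 1).
  assert (Hr : 0 < r) by (unfold r; pose proof (Rabs_pos t); lra).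
  apply Rbar_lt_le_trans with (Finite r); [simpl; unfold r; lra|].
  apply (proj1 (CV_radius_bounded a)). exists (exp (B * r)). intros k.
  rewrite Rabs_mult, <- RPow_abs, (Rabs_right r) by lra.
  eapply Rle_trans; [|apply pow_div_fact_le_exp, Rmult_le_pos; lra].
  rewrite Rpow_mult_distr. unfold Rdiv.
  replace (B ^ k * r ^ k * / INR (fact k)) with (B ^ k * / INR (fact k) * r ^ k) by ring.
  apply Rmult_le_compat_r; [apply pow_le; lra | apply Ha].
Qed.

Lemma PSeries_sumR m (c : nat -> R) (a : nat -> nat -> R) t :
  (forall w, (w < m)%nat -> ex_pseries (a w) t) ->
  PSeries (fun k => sumR m (fun w => c w * a w k)) t = sumR m (fun w => c w * PSeries (a w) t).
Proof.
  intros Ha. apply is_pseries_unique. induction m as [|m IH].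
  - rewrite sumR_0, <- (PSeries_const_0 t).
    apply PSeries_correct, CV_radius_inside. now rewrite CV_radius_const_0.
  - rewrite sumR_S.
    apply is_pseries_ext with (PS_plus (fun k => sumR m (fun w => c w * a w k)) (PS_scal (c m) (a m))).
    { intros k. unfold PS_plus, PS_scal. now rewrite sumR_S. }
    apply (is_pseries_plus _ _ t _ (scal (c m) (PSeries (a m) t))).
    + apply IH. intros; apply Ha; lia.
    + apply (@is_pseries_scal R_AbsRing R_NormedModule); [apply Rmult_comm|].
      apply PSeries_correct, Ha. lia.
Qed.

Lemma is_derive_sumR m (f : nat -> R -> R) (df : nat -> R) t :
  (forall y, (y < m)%nat -> is_derive (f y) t (df y)) ->
  is_derive (fun t => sumR m (fun y => f y t)) t (sumR m df).
Proof.
  induction m as [|m IH]; intros Hf.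
  - apply (@is_derive_const R_AbsRing R_NormedModule 0 t).
  - apply is_derive_ext with (fun t => plus (sumR m (fun y => f y t)) (f m t)).
    { intros. now rewrite sumR_S. }
    rewrite sumR_S. apply (@is_derive_plus R_AbsRing R_NormedModule).
    + apply IH. intros; apply Hf; lia.
    + apply Hf; lia.
Qed.

Section MatrixExponential.
Variables (n : nat) (M : nat -> nat -> R) (K : R).
Hypothesis HK : 0 <= K.
Hypothesis HM : forall u w, Rabs (M u w) <= K.

Definition exp_coef (s : nat -> R) (u v k : nat) : R := s k / INR (fact k) * mx_pow n M k u v.

Definition mx_series (s : nat -> R) (u v : nat) (t : R) : R := PSeries (exp_coef s u v) t.

(* The real and imaginary parts of e^{itM} = sum_k (i t M)^k / k!. *)
Definition cos_mx : nat -> nat -> R -> R := mx_series re_ipow.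
Definition sin_mx : nat -> nat -> R -> R := mx_series im_ipow.

Section BoundedCoefficients.
Variable s : nat -> R.
Hypothesis Hs : forall k, Rabs (s k) <= 1.

Lemma exp_coef_radius u v t : Rbar_lt (Rabs t) (CV_radius (exp_coef s u v)).
Proof.
  apply CV_radius_exp_dominated with (INR n * K); [apply Rmult_le_pos; auto using pos_INR|].
  intros k. unfold exp_coef, Rdiv. rewrite !Rabs_mult, Rabs_inv.
  rewrite (Rabs_right (INR (fact k))) by (apply Rle_ge, pos_INR).
  assert (0 < / INR (fact k)) by apply Rinv_0_lt_compat, INR_fact_lt_0.
  replace ((INR n * K) ^ k * / INR (fact k)) with (1 * / INR (fact k) * (INR n * K) ^ k) by ring.
  apply Rmult_le_compat; auto using Rabs_pos, mx_pow_bound.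
  - apply Rmult_le_pos; [apply Rabs_pos | lra].
  - apply Rmult_le_compat_r; [lra | auto].
Qed.

Lemma ex_mx_series u v t : ex_pseries (exp_coef s u v) t.
Proof. apply CV_radius_inside, exp_coef_radius. Qed.

Lemma mx_series_mul_comm u v t : (u < n)%nat -> (v < n)%nat ->
  sumR n (fun w => M u w * mx_series s w v t) = sumR n (fun w => M w v * mx_series s u w t).
Proof.
  intros Hu Hv. unfold mx_series.
  rewrite <- !PSeries_sumR by (intros; apply ex_mx_series).
  apply PSeries_ext. intros k. unfold exp_coef.
  transitivity (s k / INR (fact k) * mx_pow n M (S k) u v).
  - simpl mx_pow at 2. rewrite <- sumR_scal. apply sumR_ext; intros; ring.
  - rewrite mx_pow_Sr, <- sumR_scal by auto. apply sumR_ext; intros; ring.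
Qed.

End BoundedCoefficients.

Lemma PS_derive_exp_coef s u v k :
  PS_derive (exp_coef s u v) k = s (S k) / INR (fact k) * sumR n (fun w => M u w * mx_pow n M k w v).
Proof.
  unfold PS_derive, exp_coef. change (fact (S k)) with (S k * fact k)%nat.
  change (mx_pow n M (S k) u v) with (sumR n (fun w => M u w * mx_pow n M k w v)).
  rewrite mult_INR. field. split; [apply INR_fact_neq_0 | apply not_0_INR; lia].
Qed.

Lemma is_derive_cos_mx u v t :
  is_derive (cos_mx u v) t (sumR n (fun w => - M u w * sin_mx w v t)).
Proof.
  assert (Hd : forall k, PS_derive (exp_coef re_ipow u v) k =
                         sumR n (fun w => - M u w * exp_coef im_ipow w v k)).
  { intros k. rewrite PS_derive_exp_coef, (proj1 (ipow_succ k)), <- sumR_scal.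
    unfold exp_coef. apply sumR_ext. intros. field. apply INR_fact_neq_0. }
  unfold cos_mx, sin_mx, mx_series.
  rewrite <- PSeries_sumR, <- (PSeries_ext _ _ t Hd) by (intros; apply ex_mx_series, im_ipow_bound).
  apply is_derive_PSeries, exp_coef_radius, re_ipow_bound.
Qed.

Lemma is_derive_sin_mx u v t :
  is_derive (sin_mx u v) t (sumR n (fun w => M u w * cos_mx w v t)).
Proof.
  assert (Hd : forall k, PS_derive (exp_coef im_ipow u v) k =
                         sumR n (fun w => M u w * exp_coef re_ipow w v k)).
  { intros k. rewrite PS_derive_exp_coef, (proj2 (ipow_succ k)), <- sumR_scal.
    unfold exp_coef. apply sumR_ext. intros. field. apply INR_fact_neq_0. }
  unfold cos_mx, sin_mx, mx_series.
  rewrite <- PSeries_sumR, <- (PSeries_ext _ _ t Hd) by (intros; apply ex_mx_series, re_ipow_bound).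
  apply is_derive_PSeries, exp_coef_radius, im_ipow_bound.
Qed.

Section Symmetric.
Hypothesis HS : forall u v, (u < n)%nat -> (v < n)%nat -> M u v = M v u.

(* Both sides equal sum_{w,y} sin_xw M_wy cos_xy, because M commutes with cos(tM) and sin(tM)
   and M is symmetric. *)
Lemma cos_mx_dot_M_sin_mx x t : (x < n)%nat ->
  sumR n (fun y => cos_mx x y t * sumR n (fun w => M x w * sin_mx w y t)) =
  sumR n (fun y => sin_mx x y t * sumR n (fun w => M x w * cos_mx w y t)).
Proof.
  intros Hx.
  transitivity (sumR n (fun y => sumR n (fun w => sin_mx x w t * (cos_mx x y t * M w y)))).
  - apply sumR_ext. intros y Hy. unfold sin_mx.
    rewrite mx_series_mul_comm, <- sumR_scal by (auto; apply im_ipow_bound).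
    apply sumR_ext; intros; ring.
  - rewrite sumR_swap. apply sumR_ext. intros w Hw. rewrite sumR_scal. f_equal.
    unfold cos_mx. rewrite mx_series_mul_comm by (auto; apply re_ipow_bound).
    apply sumR_ext. intros y Hy. rewrite HS by auto. ring.
Qed.

Lemma is_derive_row_norm x t : (x < n)%nat ->
  is_derive (fun t => sumR n (fun y => cos_mx x y t ^ 2 + sin_mx x y t ^ 2)) t 0.
Proof.
  intros Hx.
  replace 0 with (sumR n (fun y => INR 2 * sumR n (fun w => - M x w * sin_mx w y t) * cos_mx x y t ^ 1
                               + INR 2 * sumR n (fun w => M x w * cos_mx w y t) * sin_mx x y t ^ 1)).
  - apply is_derive_sumR. intros y Hy.
    apply (@is_derive_plus R_AbsRing R_NormedModule (fun t => cos_mx x y t ^ 2));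
      apply is_derive_pow; [apply is_derive_cos_mx | apply is_derive_sin_mx].
  - rewrite (sumR_ext n _ (fun y => 2 * (sin_mx x y t * sumR n (fun w => M x w * cos_mx w y t))
                 - 2 * (cos_mx x y t * sumR n (fun w => M x w * sin_mx w y t)))).
    + rewrite sumR_minus, !sumR_scal, cos_mx_dot_M_sin_mx by auto. ring.
    + intros y Hy.
      rewrite (sumR_ext n (fun w => - M x w * _) (fun w => -1 * (M x w * sin_mx w y t)))
        by (intros; ring).
      rewrite sumR_scal. simpl INR. ring.
Qed.

Lemma row_norm_cos_sin_mx x t : (x < n)%nat ->
  sumR n (fun y => cos_mx x y t ^ 2 + sin_mx x y t ^ 2) = 1.
Proof.
  intros Hx. set (E := fun t => sumR n (fun y => cos_mx x y t ^ 2 + sin_mx x y t ^ 2)).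
  assert (HE0 : E 0 = 1).
  { unfold E, cos_mx, sin_mx, mx_series.
    rewrite <- (sumR_kronecker n x (fun _ => 1)) by exact Hx.
    apply sumR_ext. intros y Hy. rewrite !PSeries_0. unfold exp_coef, re_ipow, im_ipow. simpl.
    destruct (Nat.eqb_spec x y), (Nat.eqb_spec y x); subst; try congruence; lra. }
  change (E t = 1). rewrite <- HE0.
  destruct (Rtotal_order t 0) as [Hlt | [-> | Hgt]]; [| reflexivity |].
  - apply (@eq_is_derive R_NormedModule E t 0); auto. intros; now apply is_derive_row_norm.
  - symmetry. apply (@eq_is_derive R_NormedModule E 0 t); auto.
    intros; now apply is_derive_row_norm.
Qed.

End Symmetric.
End MatrixExponential.

Lemma cos_sin_mx_scalar lam t :
  cos_mx 1 (fun _ _ => lam) 0 0 t ^ 2 + sin_mx 1 (fun _ _ => lam) 0 0 t ^ 2 = 1.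
Proof.
  pose proof (row_norm_cos_sin_mx 1 (fun _ _ => lam) (Rabs lam) (Rabs_pos lam) (fun _ _ => Rle_refl _)
                (fun _ _ _ _ => eq_refl) 0 t Nat.lt_0_1) as H.
  rewrite sumR_S, sumR_0 in H. lra.
Qed.

Lemma series_value_eq f l : infinite_sum f l -> series_value f = l.
Proof.
  intros Hf. unfold series_value. apply uniqueness_sum with f; auto.
  apply epsilon_spec. now exists l.
Qed.

Lemma degree_bounds n adj u : 0 <= degree n adj u <= INR n.
Proof.
  unfold degree. split.
  - apply Rle_trans with (sumR n (fun _ => 0)); [rewrite sumR_const; lra|].
    apply sumR_le. intros w _. destruct (adj u w); lra.
  - apply Rle_trans with (sumR n (fun _ => 1)); [|rewrite sumR_const; lra].
    apply sumR_le. intros w _. destruct (adj u w); lra.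
Qed.

Lemma laplacian_bound n adj u w : Rabs (laplacian n adj u w) <= INR n + 1.
Proof.
  unfold laplacian. pose proof (degree_bounds n adj u).
  destruct (Nat.eqb u w), (adj u w); apply Rabs_le; lra.
Qed.

Lemma laplacian_sym n adj : simple_graph n adj -> forall u v, (u < n)%nat -> (v < n)%nat ->
  laplacian n adj u v = laplacian n adj v u.
Proof.
  intros [Hsym _] u v Hu Hv. unfold laplacian.
  destruct (Nat.eqb_spec u v) as [->|Huv]; [now rewrite Nat.eqb_refl|].
  destruct (Nat.eqb_spec v u); [lia|]. now rewrite Hsym.
Qed.

Lemma INR_succ_nonneg n : 0 <= INR n + 1.
Proof. pose proof (pos_INR n); lra. Qed.

Lemma ex_mx_series_laplacian n adj s : (forall k, Rabs (s k) <= 1) -> forall u v t,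
  ex_pseries (exp_coef n (laplacian n adj) s u v) t.
Proof. intros Hs u v t. apply (ex_mx_series n _ _ (INR_succ_nonneg n)); auto using laplacian_bound. Qed.

Lemma series_value_lap_pow n adj s t x y : (forall k, Rabs (s k) <= 1) ->
  series_value (fun k => s k * t ^ k / INR (fact k) * lap_pow n adj k x y) =
  mx_series n (laplacian n adj) s x y t.
Proof.
  intros Hs. apply series_value_eq, is_series_Reals.
  eapply is_series_ext; [|apply PSeries_correct, ex_mx_series_laplacian, Hs].
  intros k. simpl. change (scal (pow_n t k) (exp_coef n (laplacian n adj) s x y k))
    with (pow_n t k * exp_coef n (laplacian n adj) s x y k).
  rewrite pow_n_pow, lap_pow_mx_pow. unfold exp_coef. field. apply INR_fact_neq_0.
Qed.

Lemma transition_prob_cos_sin n adj t x y : transition_prob n adj t x y =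
  cos_mx n (laplacian n adj) x y t ^ 2 + sin_mx n (laplacian n adj) x y t ^ 2.
Proof.
  unfold transition_prob, U_re, U_im.
  now rewrite !series_value_lap_pow by auto using re_ipow_bound, im_ipow_bound.
Qed.

Section Clique.
Variables (n : nat) (adj : nat -> nat -> bool) (Cl : nat -> bool).
Hypothesis Hg : simple_graph n adj.
Hypothesis Hc : is_clique n adj Cl.

Lemma nongatewayP v : in_nongateway n adj Cl v = true ->
  Cl v = true /\ (v < n)%nat /\ forall w, (w < n)%nat -> Cl w = false -> adj v w = false.
Proof.
  unfold in_nongateway, gatewayb. intros Hv. apply andb_prop in Hv as [Hcv Hng].
  rewrite Hcv in Hng. apply negb_true_iff in Hng.
  split; [exact Hcv|]. split; [now apply (proj1 Hc)|].
  intros w Hw Hcw. destruct (adj v w) eqn:E; [|reflexivity].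
  rewrite <- Hng. symmetry. apply existsb_exists. exists w.
  split; [apply in_seq; lia | now rewrite Hcw, E].
Qed.

Lemma adj_nongateway v w : in_nongateway n adj Cl v = true -> (w < n)%nat ->
  adj v w = Cl w && negb (Nat.eqb w v).
Proof.
  intros Hv Hw. destruct (nongatewayP v Hv) as [Hcv [Hvn Hout]].
  destruct (Nat.eqb_spec w v) as [->|Hwv].
  - rewrite andb_false_r. now apply (proj2 Hg).
  - destruct (Cl w) eqn:E; simpl; [apply (proj2 Hc) | apply Hout]; auto.
Qed.

Definition clique_size : R := sumR n (fun w => if Cl w then 1 else 0).

Lemma degree_nongateway v : in_nongateway n adj Cl v = true -> degree n adj v = clique_size - 1.
Proof.
  intros Hv. destruct (nongatewayP v Hv) as [Hcv [Hvn _]]. unfold degree, clique_size.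
  transitivity (sumR n (fun w => (if Cl w then 1 else 0) - (if Nat.eqb w v then 1 else 0))).
  - apply sumR_ext. intros w Hw. rewrite adj_nongateway by auto.
    destruct (Nat.eqb_spec w v) as [->|]; [rewrite Hcv; simpl; ring|].
    destruct (Cl w); simpl; ring.
  - now rewrite sumR_minus, (sumR_kronecker n v (fun _ => 1)).
Qed.

Variables x y : nat.
Hypothesis Hx : in_nongateway n adj Cl x = true.
Hypothesis Hy : in_nongateway n adj Cl y = true.
Hypothesis Hxy : x <> y.

Lemma laplacian_diff_nongateway w : (w < n)%nat ->
  laplacian n adj w x - laplacian n adj w y =
  clique_size * ((if Nat.eqb w x then 1 else 0) - (if Nat.eqb w y then 1 else 0)).
Proof.
  intros Hw. destruct (nongatewayP x Hx) as [Hcx [Hxn _]].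
  destruct (nongatewayP y Hy) as [Hcy [Hyn _]].
  assert (Hyx : Nat.eqb y x = false) by (apply Nat.eqb_neq; auto).
  assert (Hxy' : Nat.eqb x y = false) by (apply Nat.eqb_neq; auto).
  destruct (Nat.eqb_spec w x) as [->|Hwx]; [|destruct (Nat.eqb_spec w y) as [->|Hwy]];
    [unfold laplacian .. |].
  - rewrite Hxy', (adj_nongateway x x), (adj_nongateway x y), Nat.eqb_refl, Hcy, Hyx,
      degree_nongateway by auto.
    simpl; rewrite andb_false_r; ring.
  - rewrite Hyx, (adj_nongateway y x), (adj_nongateway y y), Nat.eqb_refl, Hcx, Hxy',
      degree_nongateway by auto.
    simpl; rewrite andb_false_r; ring.
  - rewrite (laplacian_sym n adj Hg w x), (laplacian_sym n adj Hg w y) by auto. unfold laplacian.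
    rewrite (adj_nongateway x w), (adj_nongateway y w) by auto.
    destruct (Nat.eqb_spec x w); [lia|]. destruct (Nat.eqb_spec y w); [lia|].
    destruct (Nat.eqb_spec w x); [lia|]. destruct (Nat.eqb_spec w y); [lia|].
    destruct (Cl w); simpl; ring.
Qed.

Lemma lap_pow_diff_nongateway k :
  mx_pow n (laplacian n adj) k x x - mx_pow n (laplacian n adj) k x y = clique_size ^ k.
Proof.
  destruct (nongatewayP x Hx) as [_ [Hxn _]]. destruct (nongatewayP y Hy) as [_ [Hyn _]].
  induction k as [|k IH].
  - simpl. rewrite Nat.eqb_refl. destruct (Nat.eqb_spec x y); [lia | ring].
  - rewrite !mx_pow_Sr, <- sumR_minus by auto.
    rewrite (sumR_ext n _ (fun w => (if Nat.eqb w x then clique_size * mx_pow n (laplacian n adj) k x w else 0)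
                              - (if Nat.eqb w y then clique_size * mx_pow n (laplacian n adj) k x w else 0))).
    + rewrite sumR_minus, !sumR_kronecker, <- Rmult_minus_distr_l, IH by auto. simpl; ring.
    + intros w Hw. rewrite <- Rmult_minus_distr_l, laplacian_diff_nongateway by auto.
      destruct (Nat.eqb w x), (Nat.eqb w y); ring.
Qed.

Lemma mx_series_diff_nongateway s t : (forall k, Rabs (s k) <= 1) ->
  mx_series n (laplacian n adj) s x x t - mx_series n (laplacian n adj) s x y t =
  mx_series 1 (fun _ _ => clique_size) s 0 0 t.
Proof.
  intros Hs. unfold mx_series. rewrite <- PSeries_minus by (apply ex_mx_series_laplacian; auto).
  apply PSeries_ext. intros k. unfold PS_minus, minus, plus, opp; simpl. unfold exp_coef.
  rewrite mx_pow_scalar, <- lap_pow_diff_nongateway. ring.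
Qed.

End Clique.

(* Here c + i s = e^{it|C|} and a + i b = U_xy, for a y in S \ {x} found by pigeonhole. *)
Lemma transition_prob_nongateway n adj Cl x t :
  simple_graph n adj -> is_clique n adj Cl -> in_nongateway n adj Cl x = true ->
  (2 <= card_nongateway n adj Cl)%nat ->
  exists c s a b, c ^ 2 + s ^ 2 = 1 /\
    (INR (card_nongateway n adj Cl) - 1) * (a ^ 2 + b ^ 2) <= 1 /\
    transition_prob n adj t x x = (c + a) ^ 2 + (s + b) ^ 2.
Proof.
  intros Hg Hc Hx Hcard. destruct (nongatewayP n adj Cl Hc x Hx) as [_ [Hxn _]].
  set (L := laplacian n adj).
  set (T := fun y => in_nongateway n adj Cl y && negb (Nat.eqb y x)).
  assert (HT : INR (length (filter T (seq 0 n))) = INR (card_nongateway n adj Cl) - 1).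
  { rewrite <- sumR_indicator.
    transitivity (sumR n (fun y => (if in_nongateway n adj Cl y then 1 else 0)
                                - (if Nat.eqb y x then 1 else 0))).
    - apply sumR_ext. intros y _. unfold T.
      destruct (Nat.eqb_spec y x) as [->|]; [rewrite Hx; simpl; ring|].
      destruct (in_nongateway n adj Cl y); simpl; ring.
    - now rewrite sumR_minus, sumR_indicator, (sumR_kronecker n x (fun _ => 1)). }
  assert (HT1 : (1 <= length (filter T (seq 0 n)))%nat).
  { apply INR_le. rewrite HT. apply le_INR in Hcard. simpl in *. lra. }
  assert (Hnorm : sumR n (fun y => cos_mx n L x y t ^ 2 + sin_mx n L x y t ^ 2) = 1).
  { apply (row_norm_cos_sin_mx n L _ (INR_succ_nonneg n));
      [intros; apply laplacian_bound | now apply laplacian_sym | exact Hxn]. }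
  destruct (sumR_pigeonhole n T (fun y => cos_mx n L x y t ^ 2 + sin_mx n L x y t ^ 2))
    as [y [Hyn [HTy Hy]]]; [intros; nra | lra | exact HT1 |].
  unfold T in HTy. apply andb_prop in HTy as [HyS Hyx]. apply negb_true_iff, Nat.eqb_neq in Hyx.
  exists (cos_mx 1 (fun _ _ => clique_size n Cl) 0 0 t),
    (sin_mx 1 (fun _ _ => clique_size n Cl) 0 0 t), (cos_mx n L x y t), (sin_mx n L x y t).
  split; [apply cos_sin_mx_scalar|]. split; [now rewrite <- HT|].
  rewrite transition_prob_cos_sin. unfold cos_mx, sin_mx.
  rewrite <- (mx_series_diff_nongateway n adj Cl Hg Hc x y Hx HyS) by auto using re_ipow_bound.
  rewrite <- (mx_series_diff_nongateway n adj Cl Hg Hc x y Hx HyS) by auto using im_ipow_bound.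
  fold L. f_equal; ring.
Qed.

Lemma unit_perturbation_bound c s a b d :
  c ^ 2 + s ^ 2 = 1 -> a ^ 2 + b ^ 2 <= d ^ 2 -> 0 <= d <= 1 ->
  Rabs ((c + a) ^ 2 + (s + b) ^ 2 - 1) <= 3 * d.
Proof.
  intros Hcs Hab Hd.
  assert (Hcauchy : (c * a + s * b) ^ 2 <= d ^ 2).
  { assert (0 <= (c * b - s * a) ^ 2) by apply pow2_ge_0. nra. }
  assert (Hdot : Rabs (c * a + s * b) <= d) by (apply Rabs_le; split; nra).
  replace ((c + a) ^ 2 + (s + b) ^ 2 - 1) with (2 * (c * a + s * b) + (a ^ 2 + b ^ 2)) by nra.
  eapply Rle_trans; [apply Rabs_triang|].
  rewrite Rabs_mult, Rabs_right, (Rabs_right (a ^ 2 + b ^ 2)) by nra. nra.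
Qed.

Lemma transition_prob_nongateway_close n adj Cl x t d :
  simple_graph n adj -> is_clique n adj Cl -> in_nongateway n adj Cl x = true ->
  0 < d <= 1 -> 1 <= (INR (card_nongateway n adj Cl) - 1) * d ^ 2 ->
  Rabs (transition_prob n adj t x x - 1) <= 3 * d.
Proof.
  intros Hg Hc Hx Hd Hcard.
  set (k := INR (card_nongateway n adj Cl) - 1) in Hcard.
  assert (Hd2 : 0 < d ^ 2 <= 1) by (split; [apply pow_lt | simpl]; nra).
  assert (Hk : 1 <= k) by nra.
  destruct (transition_prob_nongateway n adj Cl x t Hg Hc Hx) as [c [s [a [b [Hcs [Hab ->]]]]]].
  { apply INR_le. fold k in Hk. simpl. unfold k in Hk. lra. }
  apply unit_perturbation_bound; [exact Hcs | fold k in Hab; nra | lra].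
Qed.

Theorem proposition3p2
  (n : nat -> nat) (adj : nat -> nat -> nat -> bool) (C : nat -> nat -> bool)
  (x : nat -> nat)
  (Hgraph : forall m, simple_graph (n m) (adj m))
  (Hclique : forall m, is_clique (n m) (adj m) (C m))
  (Hdiv : forall M : nat, exists N : nat, forall m : nat,
            (N <= m)%nat -> (M <= card_nongateway (n m) (adj m) (C m))%nat)
  (Hx : forall m, in_nongateway (n m) (adj m) (C m) (x m) = true) :
  forall t : R, 0 <= t ->
    Un_cv (fun m => transition_prob (n m) (adj m) t (x m) (x m)) 1.
Proof.
  intros t _ eps Heps.
  set (d := Rmin eps 1 / 4).
  assert (Hd : 0 < d <= 1)
    by (pose proof (Rmin_pos eps 1 Heps Rlt_0_1); pose proof (Rmin_r eps 1); unfold d; lra).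
  assert (Hde : 3 * d < eps) by (pose proof (Rmin_l eps 1); unfold d; lra).
  assert (Hinv : 1 / d ^ 2 * d ^ 2 = 1) by (field; lra).
  destruct (INR_unbounded (1 / d ^ 2 + 1)) as [M HM].
  destruct (Hdiv M) as [N HN]. exists N. intros m Hm.
  unfold R_dist. eapply Rle_lt_trans; [|exact Hde].
  apply (transition_prob_nongateway_close _ _ (C m)); auto.
  pose proof (le_INR _ _ (HN m Hm)) as Hcard.
  assert (Hinv_pos : 0 < 1 / d ^ 2) by (apply Rdiv_lt_0_compat; [lra | apply pow_lt; lra]).
  nra.
Qed.
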